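(* Let $T \in \mathbb{R}^{n_1} \otimes \mathbb{R}^{n_2} \otimes \mathbb{R}^{n_3}$ be a tensor with $Q(T) \geq r$. Then there exist linear maps $\pi_2 : \mathbb{R}^{n_2} \to \mathbb{R}^r$ and $\pi_3 : \mathbb{R}^{n_3} \to \mathbb{R}^r$ such that the slices $\tilde T_1,\ldots,\tilde T_{n_1} \in \mathbb{R}^r \otimes \mathbb{R}^r$ of $(\mathrm{id} \otimes \pi_2 \otimes \pi_3)T$ along the first axis satisfy \[ \#\big( \mathbb{P}\langle \tilde T_1,\ldots,\tilde T_{n_1}\rangle \cap \Sigma_{r,r} \big) \geq r. \]
   Context: For $r \geq 0$ let $I_r := \sum_{j=1}^r e_j \otimes e_j \otimes e_j$. The subrank of $T$ is $Q(T) := \max\{ r \mid \exists\ \mathbb{R}\text{-linear } \varphi_i : \mathbb{R}^{n_i} \to \mathbb{R}^r,\ (\varphi_1 \otimes \varphi_2 \otimes \varphi_3) T = I_r\}$. The slices of $S \in \mathbb{R}^{n_1}\otimes\mathbb{R}^{a}\otimes\mathbb{R}^{b}$ along the first axis are the $S_1,\ldots,S_{n_1}\in \mathbb{R}^a\otimes\mathbb{R}^b$ with $S = \sum_i e_i \otimes S_i$. $\mathbb{P}\langle \cdot \rangle$ denotes the projectivization of the real linear span, and $\Sigma_{r,r} := \{[A] \in \mathbb{P}(\mathbb{R}^r \otimes \mathbb{R}^r) \mid A \text{ has rank } 1\}$ is the real Segre variety of rank-one $r\times r$ matrices; $\#$ denotes cardinality. *)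

From HB Require Import structures.
From mathcomp Require Import all_boot all_order all_algebra.
From mathcomp Require Import reals.
Set Implicit Arguments. Unset Strict Implicit. Unset Printing Implicit Defensive.
Import Order.TTheory GRing.Theory Num.Theory.
Local Open Scope ring_scope.

Definition tensor (R : Type) (n1 n2 n3 : nat) := 'I_n1 -> 'I_n2 -> 'I_n3 -> R.

Definition tmap3 (R : pzRingType) (n1 n2 n3 m1 m2 m3 : nat)
  (A1 : 'M[R]_(m1, n1)) (A2 : 'M[R]_(m2, n2)) (A3 : 'M[R]_(m3, n3))
  (T : tensor R n1 n2 n3) : tensor R m1 m2 m3 :=
  fun a b c => \sum_(i < n1) \sum_(j < n2) \sum_(k < n3)
                 A1 a i * A2 b j * A3 c k * T i j k.

Definition unit_tensor (R : pzRingType) (r : nat) : tensor R r r r :=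
  fun a b c => ((a == b) && (b == c))%:R.

(* r belongs to the set whose max is the subrank:
   exist linear phi_i with (phi1 (x) phi2 (x) phi3) T = I_r. *)
Definition restricts_to_unit (R : pzRingType) (n1 n2 n3 : nat)
  (T : tensor R n1 n2 n3) (r : nat) : Prop :=
  exists (A1 : 'M[R]_(r, n1)) (A2 : 'M[R]_(r, n2)) (A3 : 'M[R]_(r, n3)),
    forall a b c, tmap3 A1 A2 A3 T a b c = @unit_tensor R r a b c.

(* Q(T) >= r, where Q(T) is the maximum of the (nonempty, bounded) set
   above: some element r' of that set satisfies r <= r'. *)
Definition subrank_ge (R : pzRingType) (n1 n2 n3 : nat)
  (T : tensor R n1 n2 n3) (r : nat) : Prop :=
  exists r' : nat, (r <= r')%N /\ restricts_to_unit T r'.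

Definition slice1 (R : Type) (n1 n2 n3 : nat) (T : tensor R n1 n2 n3)
  (i : 'I_n1) : 'M[R]_(n2, n3) := \matrix_(j, k) T i j k.

(* Matrix whose row space is the linear span <S_1, ..., S_n> (vectorized). *)
Definition span_mx (R : fieldType) (n a b : nat) (S : 'I_n -> 'M[R]_(a, b))
  : 'M[R]_(n, a * b) := \matrix_(i < n) mxvec (S i).

(* #( P<S_1,...,S_n> cap Sigma_{a,b} ) >= k : there are k pairwise distinct
   projective points [P_1], ..., [P_k] (i.e. pairwise non-proportional
   nonzero matrices) each lying in the span and of rank one. *)
Definition proj_rank_one_count_ge (R : fieldType) (n a b : nat)
  (S : 'I_n -> 'M[R]_(a, b)) (k : nat) : Prop :=
  exists P : 'I_k -> 'M[R]_(a, b),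
    (forall i, (mxvec (P i) <= span_mx S)%MS /\ \rank (P i) = 1%N) /\
    (forall i j, i != j -> forall c : R, P i != c *: P j).

From HB Require Import structures.
From mathcomp Require Import all_boot all_order all_algebra.
From mathcomp Require Import reals.
Set Implicit Arguments. Unset Strict Implicit. Unset Printing Implicit Defensive.
Import GRing.Theory.
Local Open Scope ring_scope.

(* If (A1 (x) A2 (x) A3) T = I_r, then contracting the first-axis slices of
   (id (x) A2 (x) A3) T with the rows of A1 yields the slices of I_r, i.e. the
   matrix units E_11, ..., E_rr: these are r pairwise non-proportional rank-one
   matrices in the span.  Q(T) >= r lets us assume the unit tensor has size
   exactly r, by keeping only the first r rows of each A_i. *)

Section TensorRestriction.

Variables (R : pzRingType) (n1 n2 n3 : nat).
Implicit Types (T : tensor R n1 n2 n3).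

Lemma tmap3_rowsub m1 m2 m3 p1 p2 p3 (f1 : 'I_p1 -> 'I_m1)
    (f2 : 'I_p2 -> 'I_m2) (f3 : 'I_p3 -> 'I_m3)
    (A1 : 'M[R]_(m1, n1)) (A2 : 'M[R]_(m2, n2)) (A3 : 'M[R]_(m3, n3)) T a b c :
  tmap3 (rowsub f1 A1) (rowsub f2 A2) (rowsub f3 A3) T a b c
  = tmap3 A1 A2 A3 T (f1 a) (f2 b) (f3 c).
Proof.
apply: eq_bigr => i _; apply: eq_bigr => j _; apply: eq_bigr => k _.
by rewrite !mxE.
Qed.

Lemma restricts_to_unit_le T r r' :
  (r <= r')%N -> restricts_to_unit T r' -> restricts_to_unit T r.
Proof.
move=> le_rr' [A1 [A2 [A3 HT]]].
pose w := widen_ord le_rr'.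
have w_inj : injective w by move=> x y /(congr1 val) => /= /val_inj.
exists (rowsub w A1), (rowsub w A2), (rowsub w A3) => a b c.
by rewrite tmap3_rowsub HT /unit_tensor !(inj_eq w_inj).
Qed.

Lemma subrank_geP T r : subrank_ge T r -> restricts_to_unit T r.
Proof. by move=> [r' [le_rr' HT]]; apply: restricts_to_unit_le HT. Qed.

Lemma slice1_tmap3 m1 m2 m3 (A1 : 'M[R]_(m1, n1)) (A2 : 'M[R]_(m2, n2))
    (A3 : 'M[R]_(m3, n3)) T a :
  slice1 (tmap3 A1 A2 A3 T) a
  = \sum_(l < n1) A1 a l *: slice1 (tmap3 1%:M A2 A3 T) l.
Proof.
apply/matrixP => j k; rewrite summxE !mxE.
apply: eq_bigr => l _; rewrite !mxE /tmap3.
rewrite [in RHS](bigD1 l) //= [X in _ + X]big1 ?addr0; last first.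
  move=> l' nl'l; rewrite big1 // => j' _; rewrite big1 // => k' _.
  by rewrite mxE eq_sym (negbTE nl'l) !mul0r.
rewrite mxE eqxx mulr_sumr; apply: eq_bigr => j' _.
by rewrite mulr_sumr; apply: eq_bigr => k' _; rewrite mul1r !mulrA.
Qed.

End TensorRestriction.

Lemma slice1_unit_tensor (R : pzRingType) r (i : 'I_r) :
  slice1 (@unit_tensor R r) i = delta_mx i i.
Proof.
apply/matrixP => j k; rewrite !mxE /unit_tensor.
by case: (eqVneq i j) => [<-|] //=; rewrite eq_sym.
Qed.

Lemma mxvec_lincomb_sub_span (R : fieldType) n a b
    (S : 'I_n -> 'M[R]_(a, b)) (c : 'I_n -> R) :
  (mxvec (\sum_l c l *: S l) <= span_mx S)%MS.
Proof.
have -> : mxvec (\sum_l c l *: S l) = \row_l c l *m span_mx S.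
  rewrite mulmx_sum_row linear_sum; apply: eq_bigr => l _.
  by rewrite linearZ rowK mxE.
exact: submxMl.
Qed.

Lemma proj_rank_one_count_ge_delta (R : fieldType) n r
    (S : 'I_n -> 'M[R]_(r, r)) :
  (forall i : 'I_r, mxvec (delta_mx i i : 'M[R]_r) <= span_mx S)%MS ->
  proj_rank_one_count_ge S r.
Proof.
move=> Sdelta; exists (fun i => delta_mx i i); split=> [i|i j nij c].
  by split; [apply: Sdelta | apply: mxrank_delta].
apply/negP => /eqP /matrixP /(_ i i).
by rewrite !mxE !eqxx (negbTE nij) mulr0 => /eqP; rewrite oner_eq0.
Qed.

Theorem lemma4p8 (R : realType) (n1 n2 n3 : nat) (T : tensor R n1 n2 n3)
  (r : nat) :
  subrank_ge T r ->
  exists (pi2 : 'M[R]_(r, n2)) (pi3 : 'M[R]_(r, n3)),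
    proj_rank_one_count_ge
      (slice1 (tmap3 (1%:M : 'M[R]_n1) pi2 pi3 T)) r.
Proof.
move=> /subrank_geP [A1 [A2 [A3 HT]]].
exists A2, A3; apply: proj_rank_one_count_ge_delta => i.
have -> : delta_mx i i = slice1 (tmap3 A1 A2 A3 T) i.
  by rewrite -slice1_unit_tensor; apply/matrixP => j k; rewrite !mxE HT.
rewrite slice1_tmap3; exact: mxvec_lincomb_sub_span.
Qed.
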